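(* Let $0<\epsilon\le\frac12$, $0<c'\le c$, and let $k\ge 2$ be an integer. Let $f$ be a real-valued function on the integers $m\ge k$ such that for every integer $n\ge 0$: (i) if $n\le 4k$, then $f(n+k)\le c'(n+k)$; (ii) if $n>4k$, then there exist integers $n_1,n_2$ with $n_1+n_2=n$ and $\frac12 n\le n_1\le (1-\epsilon)n$ such that $f(n+k)\le f(n_1+k)+f(n_2+k)+c(n+k)$. Then for every integer $n\ge 2k$, $$f(n+k)\le \frac{c}{\epsilon}\, n\ln n - ck .$$
   Context: $\ln$ denotes the natural logarithm. *)

From Stdlib Require Import Reals Lra Lia.

From Stdlib Require Import Reals Lra Lia Wf_nat Compare_dec.
Open Scope R_scope.

(* The analytic heart is the "splitting gain" of x ln x: for a, b > 0,
     (a+b) ln(a+b) - a ln a - b ln b >= 2ab/(a+b),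
   a consequence of ln y <= y - 1.  When the split n = n1 + n2 has
   n1 >= n/2 and n2 >= eps n, the gain is at least eps n, which pays for
   the additive cost c(n+k) once multiplied by c/eps.  If n2 < 2k the
   induction hypothesis is unavailable for n2, but then f(n2+k) <= c(n2+k)
   directly and the one-sided gain n ln n - n1 ln n1 >= n2/2 + n2 ln n,
   together with ln n >= 2 (as n > 4k >= 8), suffices.  For n <= 4k the
   hypothesis (i) and ln n >= 1 give the bound outright. *)

Lemma ln_le_pred (y : R) : 0 < y -> ln y <= y - 1.
Proof.
  intros Hy. pose proof (exp_ineq1_le (ln y)) as H. rewrite exp_ln in H; lra.
Qed.

Lemma ln_ge_of_exp_le (x y : R) : 0 < y -> exp x <= y -> x <= ln y.
Proof.
  intros Hy Hxy. rewrite <- (ln_exp x).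
  destruct (Rle_lt_or_eq_dec _ _ Hxy) as [Hlt | ->]; [| lra].
  left. apply ln_increasing; [apply exp_pos | exact Hlt].
Qed.

Lemma ln_ge_1 (y : R) : 3 <= y -> 1 <= ln y.
Proof. intros Hy. apply ln_ge_of_exp_le; pose proof exp_le_3; lra. Qed.

Lemma ln_ge_2 (y : R) : 9 <= y -> 2 <= ln y.
Proof.
  intros Hy. apply ln_ge_of_exp_le; [lra |].
  replace 2 with (1 + 1) by lra. rewrite exp_plus.
  pose proof exp_le_3. pose proof (exp_pos 1). nra.
Qed.

Lemma xlnx_ratio_gain (a s : R) : 0 < a -> 0 < s ->
  a * (ln s - ln a) >= a - a * a / s.
Proof.
  intros Ha Hs.
  assert (Hlog : ln (a / s) = ln a - ln s).
  { unfold Rdiv. rewrite ln_mult, ln_Rinv; try apply Rinv_0_lt_compat; lra. }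
  pose proof (ln_le_pred (a / s) ltac:(apply Rdiv_lt_0_compat; lra)) as H.
  rewrite Hlog in H.
  replace (a - a * a / s) with (a * (1 - a / s)) by (field; lra).
  apply Rle_ge, Rmult_le_compat_l; lra.
Qed.

Lemma xlnx_split_gain (a b : R) : 0 < a -> 0 < b ->
  (a + b) * ln (a + b) - a * ln a - b * ln b >= 2 * a * b / (a + b).
Proof.
  intros Ha Hb.
  pose proof (xlnx_ratio_gain a (a + b) Ha ltac:(lra)) as Ga.
  pose proof (xlnx_ratio_gain b (a + b) Hb ltac:(lra)) as Gb.
  replace (2 * a * b / (a + b)) with (a - a * a / (a + b) + (b - b * b / (a + b)))
    by (field; lra).
  lra.
Qed.

Definition nlogn_bound (c eps K x : R) : R := c / eps * x * ln x - c * K.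

Section RealEstimates.

Variables (c eps K : R).
Hypotheses (Hc : 0 < c) (Heps : 0 < eps) (Heps_half : eps <= 1/2).

Let c_div_eps_ge : c / eps >= 2 * c.
Proof.
  assert (c / eps * eps = c) by (field; lra).
  apply Rle_ge, (Rmult_le_reg_r eps); [exact Heps | nra].
Qed.

Let scaled_gain (g h : R) : g >= eps * h -> c / eps * g >= c * h.
Proof.
  intros Hg. replace (c * h) with (c / eps * (eps * h)) by (field; lra).
  apply Rle_ge, Rmult_le_compat_l; [apply Rlt_le, Rdiv_lt_0_compat |]; lra.
Qed.

Lemma base_case_bound (N : R) : 0 <= K -> 2 * K <= N -> 1 <= ln N ->
  c * (N + K) <= nlogn_bound c eps K N.
Proof.
  intros HK HN Hln. unfold nlogn_bound.
  assert (N * ln N >= N) by nra.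
  assert (c / eps * (N * ln N) >= 2 * c * N) by nra.
  nra.
Qed.

Lemma balanced_split_bound (N A B : R) :
  A + B = N -> N / 2 <= A -> eps * N <= B -> 0 < B ->
  nlogn_bound c eps K A + nlogn_bound c eps K B + c * (N + K)
    <= nlogn_bound c eps K N.
Proof.
  intros HAB HA HB HBpos. unfold nlogn_bound.
  assert (Hgain : N * ln N - A * ln A - B * ln B >= eps * N).
  { pose proof (xlnx_split_gain A B ltac:(lra) HBpos) as G. rewrite HAB in G.
    assert (2 * A * B / N >= eps * N).
    { assert (2 * A * B / N * N = 2 * A * B) by (field; lra).
      apply Rle_ge, (Rmult_le_reg_r N); [lra | nra]. }
    lra. }
  pose proof (scaled_gain _ _ Hgain). nra.
Qed.

(* Unbalanced split: only the large part satisfies the bound, the small part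
   costs at most c (B + K); here ln N >= 2 supplies the missing gain. *)
Lemma unbalanced_split_bound (N A B : R) :
  A + B = N -> N / 2 <= A -> eps * N <= B -> 0 < B -> 2 * K <= N -> 2 <= ln N ->
  nlogn_bound c eps K A + c * (B + K) + c * (N + K) <= nlogn_bound c eps K N.
Proof.
  intros HAB HA HB HBpos HKN Hln. unfold nlogn_bound.
  assert (Hgain : N * ln N - A * ln A >= eps * (B + N + 2 * K)).
  { pose proof (xlnx_ratio_gain A N ltac:(lra) ltac:(lra)) as G.
    assert (A - A * A / N = A * B / N) by (rewrite <- HAB; field; lra).
    assert (A * B / N >= B / 2).
    { assert (A * B / N * N = A * B) by (field; lra).
      apply Rle_ge, (Rmult_le_reg_r N); [lra | nra]. }
    assert (B * ln N >= 2 * eps * N) by nra.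
    replace (N * ln N - A * ln A) with (A * (ln N - ln A) + B * ln N)
      by (rewrite <- HAB; ring).
    nra. }
  pose proof (scaled_gain _ _ Hgain). nra.
Qed.

End RealEstimates.

Lemma split_parts (eps : R) (k n n1 n2 : nat) : 0 < eps -> (4 * k < n)%nat ->
  (n1 + n2 = n)%nat -> INR n / 2 <= INR n1 -> INR n1 <= (1 - eps) * INR n ->
  INR n1 + INR n2 = INR n /\ eps * INR n <= INR n2 /\ 0 < INR n2 /\
  (2 * k <= n1)%nat /\ (n1 < n)%nat /\ (n2 < n)%nat.
Proof.
  intros Heps Hn Hsum Hhalf Hupper.
  assert (Hreal : INR n1 + INR n2 = INR n) by (rewrite <- plus_INR, Hsum; reflexivity).
  assert (Hn_pos : 0 < INR n) by (apply lt_0_INR; lia).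
  assert (Hn2 : 0 < INR n2) by nra.
  assert (Hn2_nat : (0 < n2)%nat) by (apply INR_lt; simpl; lra).
  assert (H4k : INR (4 * k) < INR n) by (apply lt_INR; exact Hn).
  rewrite mult_INR in H4k; simpl in H4k.
  repeat split; try lra; try lia.
  - apply INR_le. rewrite mult_INR. simpl. lra.
  - apply INR_lt. lra.
Qed.

Theorem lemma3 (eps c c' : R) (k : nat) (f : nat -> R) :
  0 < eps -> eps <= 1/2 -> 0 < c' -> c' <= c -> (2 <= k)%nat ->
  (forall n : nat, (n <= 4 * k)%nat -> f (n + k)%nat <= c' * INR (n + k)) ->
  (forall n : nat, (4 * k < n)%nat ->
     exists n1 n2 : nat, (n1 + n2 = n)%nat /\
       INR n / 2 <= INR n1 /\ INR n1 <= (1 - eps) * INR n /\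
       f (n + k)%nat <= f (n1 + k)%nat + f (n2 + k)%nat + c * INR (n + k)) ->
  forall n : nat, (2 * k <= n)%nat ->
    f (n + k)%nat <= c / eps * INR n * ln (INR n) - c * INR k.
Proof.
  intros Heps Heps_half Hc' Hc'c Hk Hsmall Hsplit.
  change (forall n : nat, (2 * k <= n)%nat ->
    f (n + k)%nat <= nlogn_bound c eps (INR k) (INR n)).
  intros n; induction n as [n IH] using lt_wf_ind; intros Hn.
  assert (Hc : 0 < c) by lra.
  assert (HK : 2 <= INR k) by (pose proof (le_INR _ _ Hk); simpl in *; lra).
  assert (HKN : 2 * INR k <= INR n)
    by (pose proof (le_INR _ _ Hn); rewrite mult_INR in *; simpl in *; lra).
  destruct (le_lt_dec n (4 * k)) as [Hn_small | Hn_large].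
  -
    pose proof (Hsmall n Hn_small) as Hf. rewrite plus_INR in Hf.
    pose proof (base_case_bound c eps (INR k) Hc Heps Heps_half (INR n)
      ltac:(lra) HKN (ln_ge_1 (INR n) ltac:(lra))).
    assert (c' * (INR n + INR k) <= c * (INR n + INR k))
      by (apply Rmult_le_compat_r; lra).
    lra.
  -
    destruct (Hsplit n Hn_large) as (n1 & n2 & Hsum & Hhalf & Hupper & Hf).
    destruct (split_parts eps k n n1 n2 Heps Hn_large Hsum Hhalf Hupper)
      as (Hreal & Hn2_big & Hn2_pos & Hn1_range & Hn1_lt & Hn2_lt).
    pose proof (IH n1 Hn1_lt Hn1_range) as IH1. rewrite plus_INR in Hf.
    destruct (le_lt_dec (2 * k) n2) as [Hn2_range | Hn2_small].
    + pose proof (IH n2 Hn2_lt Hn2_range).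
      pose proof (balanced_split_bound c eps (INR k) Hc Heps Heps_half
        (INR n) (INR n1) (INR n2) Hreal Hhalf Hn2_big Hn2_pos).
      lra.
    + pose proof (Hsmall n2 ltac:(lia)) as Hf2. rewrite plus_INR in Hf2.
      assert (H9 : 9 <= INR n).
      { pose proof (le_INR _ _ Hn_large). rewrite S_INR, mult_INR in *; simpl in *; lra. }
      pose proof (unbalanced_split_bound c eps (INR k) Hc Heps Heps_half
        (INR n) (INR n1) (INR n2) Hreal Hhalf Hn2_big Hn2_pos HKN (ln_ge_2 _ H9)).
      nra.
Qed.
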